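(* Let $X=(X_k)$ be a sequence of fuzzy numbers, $\theta=(k_r)$ a lacunary sequence, $m\ge0$ an integer, $p>0$ and $\beta\in(0,1]$. If $X\in w_p^\beta(F,\Delta^m)\cap N_\theta^\beta(p,F,\Delta^m)$ and $\limsup_r\frac{k_r}{k_{r-1}^\beta}<\infty$, then the $w_p^\beta(F,\Delta^m)$-limit and the $N_\theta^\beta(p,F,\Delta^m)$-limit of $X$ coincide.
   Context: A fuzzy number is a map $X:\mathbb{R}\to[0,1]$ which is normal, fuzzy convex, upper semicontinuous, with compact closure of $\{t:X(t)>0\}$; $L(\mathbb{R})$ is the set of fuzzy numbers. Level sets $[X]^\alpha=\{t:X(t)\ge\alpha\}$ ($\alpha\in(0,1]$), $[X]^0=\overline{\{t:X(t)>0\}}$, are compact intervals $[u^\alpha,v^\alpha]$. Subtraction: $[X-Y]^\alpha=[u_1^\alpha-v_2^\alpha,v_1^\alpha-u_2^\alpha]$. Metric: $d(X,Y)=\sup_{\alpha\in[0,1]}\max\{|u_1^\alpha-u_2^\alpha|,|v_1^\alpha-v_2^\alpha|\}$. $(\Delta^0X)_k=X_k$, $(\Delta^1X)_k=X_k-X_{k+1}$, $(\Delta^mX)_k=(\Delta^1(\Delta^{m-1}X))_k$. A lacunary sequence is an increasing integer sequence $\theta=(k_r)_{r\ge0}$ with $k_0=0$, $h_r=k_r-k_{r-1}\to\infty$; $I_r=(k_{r-1},k_r]$. $X_0\in L(\mathbb{R})$ is an $N_\theta^\beta(p,F,\Delta^m)$-limit of $X$ if $\lim_r\frac{1}{h_r^\beta}\sum_{k\in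 I_r}d(\Delta^mX_k,X_0)^p=0$; $X_0$ is a $w_p^\beta(F,\Delta^m)$-limit of $X$ if $\lim_{n\to\infty}\frac{1}{n^\beta}\sum_{k=1}^n d(\Delta^mX_k,X_0)^p=0$; the spaces consist of sequences having such a limit. *)

From HB Require Import structures.
From mathcomp Require Import all_boot all_order all_algebra.
From mathcomp Require Import all_classical all_reals all_analysis.
Set Implicit Arguments. Unset Strict Implicit. Unset Printing Implicit Defensive.
Import Order.TTheory GRing.Theory Num.Theory.
Import numFieldNormedType.Exports.
Local Open Scope classical_set_scope.
Local Open Scope ring_scope.

Definition is_fuzzy_number {R : realType} (X : R -> R) : Prop :=
  [/\ (forall t, 0 <= X t <= 1),
      (exists t, X t = 1),
      (forall s t l, 0 <= l <= 1 ->
         Num.min (X s) (X t) <= X (l * s + (1 - l) * t)),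
      (forall t e, 0 < e -> exists2 d, 0 < d &
         forall s, `|s - t| < d -> X s < X t + e)
    & compact (closure [set t | 0 < X t])].

Definition level {R : realType} (X : R -> R) (a : R) : set R :=
  if 0 < a then [set t | a <= X t] else closure [set t | 0 < X t].

Definition lev_lo {R : realType} (X : R -> R) (a : R) : R := inf (level X a).
Definition lev_hi {R : realType} (X : R -> R) (a : R) : R := sup (level X a).

(* Subtraction of fuzzy numbers (Zadeh extension principle):
   (X - Y)(t) = sup_{s} min(X s, Y (s - t));
   for fuzzy numbers its level sets are [u1-v2, v1-u2]. *)
Definition fsub {R : realType} (X Y : R -> R) : R -> R :=
  fun t => sup (range (fun s => Num.min (X s) (Y (s - t)))).

Definition fdist {R : realType} (X Y : R -> R) : R :=
  sup [set Num.max `|lev_lo X a - lev_lo Y a| `|lev_hi X a - lev_hi Y a|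
      | a in `[0, 1]%classic].

Fixpoint fdelta {R : realType} (m : nat) (X : nat -> R -> R) : nat -> R -> R :=
  match m with
  | 0 => X
  | m'.+1 => fun k => fsub (fdelta m' X k) (fdelta m' X k.+1)
  end.

Definition hr (theta : nat -> nat) (r : nat) : nat := (theta r - theta r.-1)%N.

Definition lacunary (theta : nat -> nat) : Prop :=
  [/\ theta 0 = 0%N,
      (forall r, (theta r < theta r.+1)%N)
    & (forall M : nat, exists N : nat, forall r, (N <= r)%N -> (M <= hr theta r)%N)].

Definition Ntheta_limit {R : realType} (theta : nat -> nat) (beta p : R) (m : nat)
  (X : nat -> R -> R) (X0 : R -> R) : Prop :=
  (fun r : nat => ((hr theta r)%:R `^ beta)^-1 *
     \sum_((theta r.-1).+1 <= k < (theta r).+1) fdist (fdelta m X k) X0 `^ p)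
  @ \oo --> 0.

Definition w_limit {R : realType} (beta p : R) (m : nat)
  (X : nat -> R -> R) (X0 : R -> R) : Prop :=
  (fun n : nat => (n%:R `^ beta)^-1 *
     \sum_(1 <= k < n.+1) fdist (fdelta m X k) X0 `^ p)
  @ \oo --> 0.

From mathcomp Require Import all_boot all_order all_algebra.
From mathcomp Require Import all_classical all_reals all_analysis.
From mathcomp Require Import ring lra zify.
Import Order.TTheory GRing.Theory Num.Theory.
Import numFieldNormedType.Exports.
Local Open Scope classical_set_scope.
Local Open Scope ring_scope.
Set Implicit Arguments. Unset Strict Implicit.

(* If X0 and X1 are both limits and c := (d(X0,X1)/2)^p, the triangle
   inequality gives c <= d(Δ^m X_k, X0)^p + d(Δ^m X_k, X1)^p for every k.
   Sum over 1 <= k <= k_r.  Since n^β <= n, the w-limit bounds the first sum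
   by ε k_r; since h_r^β <= h_r, the N_θ-limit bounds the second one, block
   by block, by a constant plus ε k_r.  Hence c <= 2ε + O(1/k_r), so c = 0.
   Finally d separates fuzzy numbers, which are determined by the endpoints
   of their level sets. *)

Section BoundedSupport.
Variable R : realType.
Implicit Types (Y Z W : R -> R) (S : set R) (B : R).

Definition bounded_support Y := exists2 B, 0 <= B & forall t, 0 < Y t -> `|t| <= B.

Lemma closure_norm_le S B :
  (forall t, S t -> `|t| <= B) -> forall t, closure S t -> `|t| <= B.
Proof.
have closedB : closed [set t : R | `|t| <= B].
  have -> : [set t : R | `|t| <= B] = [set t | t <= B] `&` [set t | - B <= t].
    by apply/seteqP; split=> s /=; rewrite ler_norml; [case/andP | case=> -> ->].
  by apply: closedI; [apply: closed_le | apply: closed_ge].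
by move=> SB t /(closureS SB); rewrite -(closure_id _).1.
Qed.

Lemma fuzzy_number_bounded_support Y : is_fuzzy_number Y -> bounded_support Y.
Proof.
case=> _ _ _ _ /compact_bounded [M [_ HM]].
exists (Num.max M 0 + 1); first by rewrite addr_ge0 // le_max lexx orbT.
move=> t Yt; apply: (HM (Num.max M 0 + 1)); last exact: subset_closure.
by rewrite (le_lt_trans (y := Num.max M 0)) ?ltrDl // le_max lexx.
Qed.

Lemma bounded_support_fsub Y Z :
  bounded_support Y -> bounded_support Z -> bounded_support (fsub Y Z).
Proof.
move=> [b b0 Yb] [c c0 Zc]; exists (b + c); first exact: addr_ge0.
move=> t fsub_gt0; rewrite leNgt; apply/negP => bc_lt_t.
suff : fsub Y Z t <= 0 by rewrite leNgt fsub_gt0.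
apply: ge_sup; first by exists (Num.min (Y 0) (Z (0 - t))), 0.
move=> _ [s _ <-]; rewrite ge_min !leNgt -negb_and; apply/negP.
move=> /andP[/Yb Ys /Zc Zst]; move: bc_lt_t; rewrite ltNge.
have -> : t = s - (s - t) by rewrite opprB addrC subrK.
by rewrite (le_trans (ler_normB _ _)) // lerD.
Qed.

Lemma bounded_support_fdelta (X : nat -> R -> R) m k :
  (forall k, bounded_support (X k)) -> bounded_support (fdelta m X k).
Proof. by move=> XB; elim: m k => [|m IHm] k //=; apply: bounded_support_fsub. Qed.

Lemma norm_sup_le S B : 0 <= B -> (forall t, S t -> `|t| <= B) -> `|sup S| <= B.
Proof.
move=> B0 SB; have [->|/set0P[x Sx]] := eqVneq S set0; first by rewrite sup0 normr0.
have ubB : ubound S B by move=> t /SB; rewrite ler_norml => /andP[].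
rewrite ler_norml ge_sup ?andbT //; last by exists x.
have := SB _ Sx; rewrite ler_norml => /andP[Bx _].
by rewrite (le_trans Bx) // ub_le_sup //; exists B.
Qed.

Lemma norm_inf_le S B : 0 <= B -> (forall t, S t -> `|t| <= B) -> `|inf S| <= B.
Proof.
move=> B0 SB; rewrite /inf normrN; apply: norm_sup_le => // _ [t St <-].
by rewrite normrN SB.
Qed.

Lemma lev_norm_le Y : bounded_support Y ->
  exists B, forall a, `|lev_lo Y a| <= B /\ `|lev_hi Y a| <= B.
Proof.
move=> [B B0 YB]; exists B => a.
have levB t : level Y a t -> `|t| <= B.
  rewrite /level; case: ifPn => a0; last exact: closure_norm_le.
  by move=> /= aYt; apply: YB; apply: lt_le_trans aYt.
by split; [apply: norm_inf_le | apply: norm_sup_le].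
Qed.

Definition level_gap Y Z (a : R) :=
  Num.max `|lev_lo Y a - lev_lo Z a| `|lev_hi Y a - lev_hi Z a|.

Lemma level_gap_le Y Z : bounded_support Y -> bounded_support Z ->
  exists C, forall a, level_gap Y Z a <= C.
Proof.
move=> /lev_norm_le [b Yb] /lev_norm_le [c Zc]; exists (b + c) => a.
have [Ylo Yhi] := Yb a; have [Zlo Zhi] := Zc a.
by rewrite ge_max !(le_trans (ler_normB _ _)) ?lerD.
Qed.

Lemma level_gap_le_fdist Y Z a : bounded_support Y -> bounded_support Z ->
  a \in `[0, 1] -> level_gap Y Z a <= fdist Y Z.
Proof.
move=> YB ZB a01; have [C gapC] := level_gap_le YB ZB.
apply: ub_le_sup; first by exists C => _ [b _ <-]; apply: gapC.
by exists a => //; rewrite inE in a01.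
Qed.

Lemma ge_fdist Y Z x :
  (forall a, a \in `[0, 1] -> level_gap Y Z a <= x) -> fdist Y Z <= x.
Proof.
move=> gapx; apply: ge_sup.
  by exists (level_gap Y Z 0), 0; rewrite //= in_itv /= lexx ler01.
by move=> _ [a a01 <-]; apply: gapx; rewrite inE.
Qed.

Lemma fdist_ge0 Y Z : bounded_support Y -> bounded_support Z -> 0 <= fdist Y Z.
Proof.
move=> YB ZB; apply: le_trans (level_gap_le_fdist (a := 0) YB ZB _).
  by rewrite le_max normr_ge0.
by rewrite in_itv /= lexx ler01.
Qed.

Lemma fdist_triangle Y Z W :
  bounded_support Y -> bounded_support Z -> bounded_support W ->
  fdist Z W <= fdist Y Z + fdist Y W.
Proof.
move=> YB ZB WB; apply: ge_fdist => a a01.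
have := level_gap_le_fdist YB ZB a01; have := level_gap_le_fdist YB WB a01.
rewrite !ge_max => /andP[YWlo YWhi] /andP[YZlo YZhi].
have dist_le (y z w : R) : `|z - w| <= `|y - z| + `|y - w|.
  by rewrite (le_trans (ler_distD y z w)) // [`|z - y|]distrC.
by rewrite (le_trans (dist_le _ _ _) (lerD YZlo YWlo))
  (le_trans (dist_le _ _ _) (lerD YZhi YWhi)).
Qed.

Lemma powR_half_le (x y z p : R) : 0 <= p -> 0 <= x -> 0 <= y -> 0 <= z ->
  z <= x + y -> (z / 2) `^ p <= x `^ p + y `^ p.
Proof.
move=> p0 x0 y0 z0 zxy; have z2_ge0 : 0 <= z / 2 by rewrite divr_ge0.
have [z2x|xz2] := leP (z / 2) x.
  by rewrite (le_trans (ge0_ler_powR p0 _ _ z2x)) ?nnegrE // lerDl powR_ge0.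
have z2y : z / 2 <= y by lra.
by rewrite (le_trans (ge0_ler_powR p0 _ _ z2y)) ?nnegrE // lerDr powR_ge0.
Qed.

End BoundedSupport.

Section FuzzyLevels.
Variable R : realType.
Implicit Types (X Y : R -> R) (a s t : R).

Lemma fuzzy_convex_between X s1 s2 t a : is_fuzzy_number X ->
  s1 <= t <= s2 -> a <= X s1 -> a <= X s2 -> a <= X t.
Proof.
case=> _ _ Xconv _ _ /andP[s1t ts2] aXs1 aXs2.
have [s12e|s12] := eqVneq s1 s2.
  by have -> : t = s1 by apply/le_anti; rewrite s1t s12e ts2.
have s12_gt0 : 0 < s2 - s1 by rewrite subr_gt0 lt_neqAle s12 (le_trans s1t ts2).
pose l := (s2 - t) / (s2 - s1).
have l01 : 0 <= l <= 1.
  by rewrite divr_ge0 ?subr_ge0 ?ler_pdivrMr // ?mul1r; lra.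
have -> : t = l * s1 + (1 - l) * s2 by rewrite /l; field; rewrite lt0r_neq0.
by apply: le_trans (Xconv _ _ _ l01); rewrite le_min aXs1 aXs2.
Qed.

Lemma fuzzy_levelP X a t : is_fuzzy_number X -> 0 < a <= 1 ->
  (a <= X t) <-> (lev_lo X a <= t <= lev_hi X a).
Proof.
move=> FX /andP[a0 a1]; have [B _ XB] := fuzzy_number_bounded_support FX.
have [_ [t1 Xt1] _ Xusc _] := FX.
have levelE : level X a = [set t | a <= X t] by rewrite /level a0.
have levelB s : a <= X s -> `|s| <= B by move=> aXs; apply: XB; apply: lt_le_trans aXs.
have level_n0 : [set t | a <= X t] !=set0 by exists t1; rewrite /= Xt1.
have level_ub : has_ubound [set t | a <= X t].
  by exists B => s /levelB; rewrite ler_norml => /andP[].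
have level_lb : has_lbound [set t | a <= X t].
  by exists (- B) => s /levelB; rewrite ler_norml => /andP[].
rewrite /lev_lo /lev_hi levelE; split=> [aXt|/andP[lo_t t_hi]].
  by rewrite (ge_inf level_lb aXt) (ub_le_sup level_ub aXt).
rewrite leNgt; apply/negP => Xt_lt_a.
have [d d0 Xd] := Xusc t (a - X t) ltac:(by rewrite subr_gt0).
have far_from_t s : a <= X s -> d <= `|s - t|.
  move=> aXs; rewrite leNgt; apply/negP => /Xd; rewrite addrC subrK.
  by move/(le_lt_trans aXs); rewrite ltxx.
(* Level points within d of the inf and of the sup are >= d away from t, so they lie on
   either side of t. *)
have [s1 aXs1 s1_lt] := inf_adherent d0 (conj level_n0 level_lb).
have [s2 aXs2 s2_gt] := sup_adherent d0 (conj level_n0 level_ub).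
have s1t : s1 <= t.
  rewrite leNgt; apply/negP => ts1; have := far_from_t _ aXs1.
  by rewrite ger0_norm ?subr_ge0 ?(ltW ts1) //; move: s1_lt lo_t; lra.
have ts2 : t <= s2.
  rewrite leNgt; apply/negP => s2t; have := far_from_t _ aXs2.
  by rewrite distrC ger0_norm ?subr_ge0 ?(ltW s2t) //; move: s2_gt t_hi; lra.
by move: Xt_lt_a; rewrite ltNge (fuzzy_convex_between FX _ aXs1 aXs2) ?s1t.
Qed.

Lemma fuzzy_le_of_levels X Y : is_fuzzy_number X -> is_fuzzy_number Y ->
  (forall a, 0 < a <= 1 -> lev_lo Y a <= lev_lo X a /\ lev_hi X a <= lev_hi Y a) ->
  forall t, X t <= Y t.
Proof.
move=> FX FY levXY t; rewrite leNgt; apply/negP => YXt.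
have [/(_ t) /andP[_ Xt1] _ _ _ _] := FX; have [/(_ t) /andP[Yt0 _] _ _ _ _] := FY.
have a01 : 0 < X t <= 1 by rewrite Xt1 (le_lt_trans Yt0 YXt).
have [Ylo Yhi] := levXY _ a01.
have /andP[Xlo Xhi] := (fuzzy_levelP t FX a01).1 (lexx _).
have := (fuzzy_levelP t FY a01).2; rewrite (le_trans Ylo Xlo) (le_trans Xhi Yhi).
by move=> /(_ isT); rewrite leNgt YXt.
Qed.

Lemma fdist_eq0_fuzzy X Y : is_fuzzy_number X -> is_fuzzy_number Y ->
  fdist X Y = 0 -> X = Y.
Proof.
move=> FX FY dXY0.
have lev_eq a : 0 < a <= 1 -> lev_lo X a = lev_lo Y a /\ lev_hi X a = lev_hi Y a.
  move=> /andP[a0 a1]; have a01 : a \in `[0, 1] by rewrite in_itv /= (ltW a0) a1.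
  have := level_gap_le_fdist (fuzzy_number_bounded_support FX)
    (fuzzy_number_bounded_support FY) a01.
  by rewrite dXY0 ge_max !normr_le0 !subr_eq0 => /andP[/eqP-> /eqP->].
apply: funext => t; apply/le_anti/andP.
by split; apply: fuzzy_le_of_levels => // a /lev_eq[-> ->].
Qed.

End FuzzyLevels.

Section LacunaryAverages.
Variable R : realType.
Implicit Types (D E u : nat -> R) (theta : nat -> nat).

Lemma sum_le_of_powR_avg_cvg0 (s : nat -> nat) u (beta eps : R) :
  beta <= 1 -> 0 < eps -> (forall n, 0 <= u n) ->
  (fun n => ((s n)%:R `^ beta)^-1 * u n) @ \oo --> 0 ->
  exists N, forall n, (N <= n)%N -> (0 < s n)%N -> u n <= eps * (s n)%:R.
Proof.
move=> beta1 eps0 u0 /cvgr0Pnorm_lt /(_ eps eps0) [N _ avg_small].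
exists N => n Nn sn0; have s1 : 1 <= (s n)%:R :> R by rewrite ler1n.
have pow_gt0 : 0 < (s n)%:R `^ beta by rewrite powR_gt0 // (lt_le_trans ltr01 s1).
have := avg_small n Nn; rewrite ger0_norm ?mulr_ge0 ?invr_ge0 ?(ltW pow_gt0) //.
rewrite mulrC ltr_pdivrMr // => lt_eps; apply/ltW/(lt_le_trans lt_eps).
by rewrite ler_wpM2l ?(ltW eps0) // ler1_powR.
Qed.

Lemma sum_blocks_le theta u (eps : R) N :
  {homo theta : i j / (i <= j)%N} ->
  (forall r, (N < r)%N ->
     \sum_((theta r.-1).+1 <= k < (theta r).+1) u k <= eps * (hr theta r)%:R) ->
  forall r, (N <= r)%N ->
  \sum_((theta N).+1 <= k < (theta r).+1) u k <= eps * (theta r - theta N)%:R.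
Proof.
move=> theta_mono block_le r /subnKC <-; elim: (r - N)%N => [|j IHj].
  by rewrite addn0 big_geq // subnn mulr0.
have /andP[thetaNj thetaSj] : (theta N <= theta (N + j) <= theta (N + j).+1)%N.
  by rewrite !theta_mono ?leq_addr.
rewrite addnS (big_cat_nat _ (n := (theta (N + j)).+1)) ?ltnS //=.
have -> : (theta (N + j).+1 - theta N = theta (N + j) - theta N + hr theta (N + j).+1)%N.
  by rewrite /hr /=; lia.
by rewrite natrD mulrDr lerD // block_le // ltnS leq_addr.
Qed.

Lemma Ntheta_prefix_sum_le theta (beta eps : R) E :
  (forall r, (theta r < theta r.+1)%N) -> beta <= 1 -> 0 < eps ->
  (forall k, 0 <= E k) ->
  (fun r : nat => ((hr theta r)%:R `^ beta)^-1 *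
     \sum_((theta r.-1).+1 <= k < (theta r).+1) E k) @ \oo --> 0 ->
  exists K N, forall r, (N <= r)%N ->
    \sum_(1 <= k < (theta r).+1) E k <= K + eps * (theta r)%:R.
Proof.
move=> theta_lt beta1 eps0 E0 NE.
have theta_mono : {homo theta : i j / (i <= j)%N}.
  by apply: homo_leq => // [i j k /leq_trans|i]; [apply | apply: ltnW].
have [N blockE] := sum_le_of_powR_avg_cvg0 (s := hr theta)
  (u := fun r => \sum_((theta r.-1).+1 <= k < (theta r).+1) E k)
  beta1 eps0 (fun r => sumr_ge0 _ (fun k _ => E0 k)) NE.
exists (\sum_(1 <= k < (theta (maxn N 1)).+1) E k), (maxn N 1) => r Nr.
rewrite (big_cat_nat _ (n := (theta (maxn N 1)).+1)) ?ltnS ?theta_mono //= lerD2l.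
apply: le_trans (sum_blocks_le (eps := eps) theta_mono _ Nr) _; last first.
  by rewrite ler_wpM2l ?(ltW eps0) // ler_nat leq_subr.
move=> [|r'] // Nr'; apply: blockE; first exact: leq_trans (leq_maxl _ _) (ltnW Nr').
by rewrite /hr subn_gt0; apply: theta_lt.
Qed.

Lemma avg_cvg0_not_bounded_below theta (beta c : R) D E :
  (forall r, (theta r < theta r.+1)%N) -> beta <= 1 -> 0 < c ->
  (forall k, 0 <= D k) -> (forall k, 0 <= E k) -> (forall k, c <= D k + E k) ->
  (fun n : nat => (n%:R `^ beta)^-1 * \sum_(1 <= k < n.+1) D k) @ \oo --> 0 ->
  (fun r : nat => ((hr theta r)%:R `^ beta)^-1 *
     \sum_((theta r.-1).+1 <= k < (theta r).+1) E k) @ \oo --> 0 ->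
  False.
Proof.
move=> theta_lt beta1 c0 D0 E0 cDE wD NE.
have theta_ge r : (r <= theta r)%N.
  by elim: r => // r IHr; apply: leq_ltn_trans IHr (theta_lt r).
pose eps := c / 4; have eps0 : 0 < eps by rewrite divr_gt0.
have [ND sumD] := sum_le_of_powR_avg_cvg0 (s := id)
  (u := fun n => \sum_(1 <= k < n.+1) D k) beta1 eps0
  (fun n => sumr_ge0 _ (fun k _ => D0 k)) wD.
have [K [NE' sumE]] := Ntheta_prefix_sum_le theta_lt beta1 eps0 E0 NE.
pose r := maxn (maxn NE' ND) (maxn (Num.truncn (2 * K / c)).+1 1); pose n := theta r.
have [NEr NDr Kr r_gt0] : [/\ (NE' <= r)%N, (ND <= r)%N,
    ((Num.truncn (2 * K / c)).+1 <= r)%N & (0 < r)%N].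
  by split; rewrite /r; lia.
have lower : c * n%:R <= \sum_(1 <= k < n.+1) D k + \sum_(1 <= k < n.+1) E k.
  have -> : c * n%:R = \sum_(1 <= k < n.+1) c by rewrite sumr_const_nat subn1 mulr_natr.
  by rewrite -big_split; apply: ler_sum => k _; apply: cDE.
have n_large : 2 * K < n%:R * c.
  rewrite -ltr_pdivrMr // (lt_le_trans (truncnS_gt _)) // ler_nat.
  exact: leq_trans Kr (theta_ge r).
have := sumD n (leq_trans NDr (theta_ge r)) (leq_trans r_gt0 (theta_ge r)).
have := sumE r NEr; rewrite -/n /eps => {}sumE {}sumD.
by move: lower n_large; nra.
Qed.

End LacunaryAverages.

Theorem theorem2p16 (R : realType) (X : nat -> R -> R) (theta : nat -> nat)
  (m : nat) (p beta : R) (X0 X1 : R -> R) :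
  (forall k, is_fuzzy_number (X k)) ->
  lacunary theta ->
  0 < p -> 0 < beta <= 1 ->
  is_fuzzy_number X0 -> is_fuzzy_number X1 ->
  w_limit beta p m X X0 ->
  Ntheta_limit theta beta p m X X1 ->
  (exists M : R, exists N : nat, forall r, (N <= r)%N ->
     (theta r)%:R / ((theta r.-1)%:R `^ beta) <= M) ->
  X0 = X1.
Proof.
move=> FX [_ theta_lt _] p0 /andP[_ beta1] FX0 FX1 wX0 NX1 _.
have XB k : bounded_support (fdelta m X k).
  by apply: bounded_support_fdelta => j; apply: fuzzy_number_bounded_support.
have X0B := fuzzy_number_bounded_support FX0.
have X1B := fuzzy_number_bounded_support FX1.
apply: fdist_eq0_fuzzy => //; apply/eqP; rewrite eq_le fdist_ge0 // andbT leNgt.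
apply/negP => dist_gt0.
apply: (avg_cvg0_not_bounded_below (c := (fdist X0 X1 / 2) `^ p)
  theta_lt beta1 _ _ _ _ wX0 NX1).
- by rewrite powR_gt0 // divr_gt0.
- by move=> k; apply: powR_ge0.
- by move=> k; apply: powR_ge0.
- move=> k; apply: powR_half_le (fdist_triangle (XB k) X0B X1B);
    by rewrite ?(ltW p0) // fdist_ge0.
Qed.
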